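(* Let $\vartheta$ be primitive, geometrically compatible and recognisable, let $\mu\in\mathcal M$ and let $\mathbf P$ be a probability choice for $\vartheta$. Then every $\nu\in\Pi^{-1}(\mu)\cap\mathcal M[\mathbf P]$ satisfies \[ R^\nu=\lambda_{\mu,\mathbf P}^{-1}M(\mathbf P)R^\mu . \] In particular this holds for $\nu=T_{\mathbf P}(\mu)$ (which belongs to $\Pi^{-1}(\mu)\cap\mathcal M[\mathbf P]$), and if $\mu,\mu'\in\mathcal M$ satisfy $R^\mu=R^{\mu'}$ then $R^{T_{\mathbf P}(\mu)}=R^{T_{\mathbf P}(\mu')}$.
   Context: Standing assumptions: $\mathcal A$ finite alphabet; $\vartheta$ a random substitution (letters to non-empty finite sets of non-empty words, extended to words by concatenation $\vartheta(u_1\cdots u_n)=\{w_1\cdots w_n:w_i\in\vartheta(u_i)\}$), $X_\vartheta$ its subshift (sequences all of whose subwords are subwords of words in some $\vartheta^n(a)$) with shift $S$, $[u]$ the cylinder of $u$ at position $0$. Primitive: some marginal (choice $\theta(a)\in\vartheta(a)$) of some $\vartheta^n$ has primitive substitution matrix $M_{ab}=|\theta(b)|_a$. Geometrically compatible: some $\lambda>1$ and positive row vector $L$ with $LM=\lambda L$ for the substitution matrix of every marginal. Recognisable: every $y\in X_\vartheta$ has a unique decomposition $S^{-k}y=\cdots v_{-1}.v_0v_1\cdots$ with $x\in X_\vartheta$, $v_i\in\vartheta(x_i)$, $0\le k<|v_0|$ (all unique). $\mathcal M$ is the set of shift-invariant Borel probability measures on $X_\vartheta$; $R^\mu=(\mu([a]))_{a\in\mathcal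 A}$ as a column vector. A probability choice $\mathbf P$ assigns to each $a$ a probability vector $(\mathbf P_{v,a})_{v\in\vartheta(a)}$; $M(\mathbf P)_{ab}=\sum_{v\in\vartheta(b)}\mathbf P_{v,b}|v|_a$. Let $A=\vartheta(X_\vartheta)$ (all concatenations $\cdots v_{-1}.v_0v_1\cdots$, $v_i\in\vartheta(x_i)$, $x\in X_\vartheta$); by recognisability $A$ is identified with $\{(x_i,v_i)_i: x\in X_\vartheta,v_i\in\vartheta(x_i)\}\subset\mathcal B^{\mathbb Z}$, $\mathcal B=\{(a,v):v\in\vartheta(a)\}$, with first return map $S_A$ corresponding to the shift and return time $r_A=|v_0|$; $[(a_1,v_1)\cdots(a_n,v_n)]$ denotes the corresponding cylinder in $A$. For $\nu\in\mathcal M$, $\nu_A=\nu(\cdot\cap A)/\nu(A)$. Desubstitution $\Pi:\mathcal M\to\mathcal M$: $\Pi(\nu)([a_1\cdots a_n])=\sum_{v_1,\dots,v_n}\nu_A([(a_1,v_1)\cdots(a_n,v_n)])$. $\mathcal M[\mathbf P]$ is the set of $\nu\in\mathcal M$ with $\nu_A([(a,v)])=\mathbf P_{v,a}\sum_{u\in\vartheta(a)}\nu_A([(a,u)])$ for all $a$ and $v\in\vartheta(a)$. For $\mu\in\mathcal M$, $\vartheta_{\mathbf P}(\mu)$ is the $S_A$-invariant probability on $A$ with $\vartheta_{\mathbf P}(\mu)([(a_1,v_1)\cdots(a_n,v_n)])=\mu([a_1\cdots a_n])\prod_i\mathbf P_{v_i,a_i}$; $\lambda_{\mu,\mathbf P}=\sum_a\mu([a])\sum_{v\in\vartheta(a)}\mathbf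 P_{v,a}|v|$; the $\mathbf P$-transfer $T_{\mathbf P}(\mu)\in\mathcal M$ is defined by $T_{\mathbf P}(\mu)(f)=\lambda_{\mu,\mathbf P}^{-1}\int_A\sum_{i=0}^{r_A-1}f\circ S^i\,d\vartheta_{\mathbf P}(\mu)$ for continuous $f$. *)

From HB Require Import structures.
From mathcomp Require Import all_boot all_order all_algebra.
From mathcomp Require Import all_classical all_reals all_analysis.

Set Implicit Arguments.
Unset Strict Implicit.
Unset Printing Implicit Defensive.

Import Order.TTheory GRing.Theory Num.Theory.
Local Open Scope classical_set_scope.
Local Open Scope ring_scope.

(* A random substitution over the finite alphabet Alph is a map        *)
(* th : Alph -> seq (seq Alph); th a lists the (distinct, non-empty)   *)
(* realisations of a; the set  theta(a)  is  [pred v | v \in th a].    *)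

Definition is_rsubst (Alph : finType) (th : Alph -> seq (seq Alph)) : Prop :=
  forall a, [/\ th a != [::], uniq (th a) & all (fun w => w != [::]) (th a)].

Definition subst_word (Alph : finType) (th : Alph -> seq (seq Alph))
    (u : seq Alph) : seq (seq Alph) :=
  foldr (fun a acc => [seq v ++ w | v <- th a, w <- acc]) [:: [::]] u.

Definition subst_iter (Alph : finType) (th : Alph -> seq (seq Alph))
    (n : nat) (a : Alph) : seq (seq Alph) :=
  iter n (fun S => flatten [seq subst_word th w | w <- S]) [:: [:: a]].

Definition legal (Alph : finType) (th : Alph -> seq (seq Alph))
    (u : seq Alph) : Prop :=
  exists n a w, w \in subst_iter th n a /\ infix u w.

Definition window (Alph : finType) (x : int -> Alph) (m : int) (n : nat)
    : seq Alph :=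
  [seq x (m + (i%:Z))%R | i <- iota 0 n].

Definition subshift (Alph : finType) (th : Alph -> seq (seq Alph))
    : set (int -> Alph) :=
  [set x | forall (m : int) (n : nat), legal th (window x m n)].

Definition shift (Alph : finType) (x : int -> Alph) : int -> Alph :=
  fun n => x (n + 1)%R.

Definition cyl (Alph : finType) (u : seq Alph) : set (int -> Alph) :=
  [set y | window y 0 (size u) = u].

Definition marginal_of (Alph : finType) (th : Alph -> seq (seq Alph))
    (n : nat) (t : Alph -> seq Alph) : Prop :=
  forall a, t a \in subst_iter th n a.

Definition subst_mat (Alph : finType) (t : Alph -> seq Alph) (a b : Alph)
    : nat := count_mem a (t b).

Fixpoint matpow (Alph : finType) (M : Alph -> Alph -> nat) (k : nat)
    (a b : Alph) : nat :=
  if k is k'.+1 then (\sum_(c : Alph) matpow M k' a c * M c b)%N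
  else nat_of_bool (a == b).

Definition primitive_mat (Alph : finType) (M : Alph -> Alph -> nat) : Prop :=
  exists k, (0 < k)%N /\ forall a b, (0 < matpow M k a b)%N.

Definition primitive_rs (Alph : finType) (th : Alph -> seq (seq Alph))
    : Prop :=
  exists n t, (0 < n)%N /\ marginal_of th n t /\ primitive_mat (subst_mat t).

Definition geom_compatible (R : realType) (Alph : finType)
    (th : Alph -> seq (seq Alph)) : Prop :=
  exists (lam : R) (L : Alph -> R),
    [/\ 1 < lam, (forall a, 0 < L a) &
        forall t, marginal_of th 1 t ->
          forall b, \sum_(a : Alph) L a * (subst_mat t a b)%:R = lam * L b].

(* decomp th y x v c : y = ... v_{-1} . v_0 v_1 ...  with x in X,      *)
(* v_i in theta(x_i); c i is the position in y where v_i starts.       *)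

Definition decomp (Alph : finType) (th : Alph -> seq (seq Alph))
    (y x : int -> Alph) (v : int -> seq Alph) (c : int -> int) : Prop :=
  [/\ subshift th x,
      forall i, v i \in th (x i),
      c 0 = 0,
      forall i, c (i + 1) = c i + (size (v i))%:Z
    & forall i (j : nat), (j < size (v i))%N ->
        y (c i + j%:Z) = nth (x i) (v i) j].

Definition decomp_at (Alph : finType) (th : Alph -> seq (seq Alph))
    (y x : int -> Alph) (v : int -> seq Alph) (k : nat) : Prop :=
  (k < size (v 0))%N /\
  exists c, decomp th (fun n => y (n - k%:Z)) x v c.

Definition recognisable (Alph : finType) (th : Alph -> seq (seq Alph))
    : Prop :=
  forall y, subshift th y ->
    exists x v k, decomp_at th y x v k /\
      forall x' v' k', decomp_at th y x' v' k' ->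
        [/\ x' = x, v' = v & k' = k].

Definition Aset (Alph : finType) (th : Alph -> seq (seq Alph))
    : set (int -> Alph) :=
  [set y | exists x v c, decomp th y x v c].

Definition Acyl (Alph : finType) (th : Alph -> seq (seq Alph))
    (ws : seq (Alph * seq Alph)) : set (int -> Alph) :=
  [set y | exists x v c, decomp th y x v c /\
             [seq (x i%:Z, v i%:Z) | i <- iota 0 (size ws)] = ws].

(* return time r_A(y) = |v_0| (well defined on A by recognisability) *)
Definition retA (Alph : finType) (th : Alph -> seq (seq Alph))
    (y : int -> Alph) : nat :=
  xget 0%N [set n | exists x v c, decomp th y x v c /\ n = size (v 0)].

Definition SA (Alph : finType) (th : Alph -> seq (seq Alph))
    (y : int -> Alph) : int -> Alph :=
  iter (retA th y) (@shift Alph) y.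

Definition choices (Alph : finType) (th : Alph -> seq (seq Alph))
    (u : seq Alph) : seq (seq (seq Alph)) :=
  foldr (fun a acc => [seq v :: vs | v <- th a, vs <- acc]) [:: [::]] u.

(* The measurable space: sequences int -> Alph with the sigma-algebra   *)
(* generated by cylinders (= Borel sigma-algebra of the product        *)
(* topology).  The point a0 is only needed for the Pointed instance.   *)

Definition sspace (Alph : finType) (a0 : Alph) : Type := int -> Alph.

HB.instance Definition _ (Alph : finType) (a0 : Alph) :=
  gen_eqMixin (@sspace Alph a0).
HB.instance Definition _ (Alph : finType) (a0 : Alph) :=
  gen_choiceMixin (@sspace Alph a0).
HB.instance Definition _ (Alph : finType) (a0 : Alph) :=
  isPointed.Build (@sspace Alph a0) (fun _ => a0).

Definition cylinders (Alph : finType) (a0 : Alph) : set (set (@sspace Alph a0)) :=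
  [set B | exists (m : int) (u : seq Alph),
             B = [set y | window y m (size u) = u]].

Notation SS Alph a0 := (g_sigma_algebraType (@cylinders Alph a0)).

Section Measures.
Context (Alph : finType) (a0 : Alph) (R : realType)
        (th : Alph -> seq (seq Alph)).
Local Notation T := (SS Alph a0).

Definition inM (nu : probability T R) : Prop :=
  nu (subshift th : set T) = 1%E /\
  forall B : set T, measurable B -> nu ((@shift Alph) @^-1` B) = nu B.

Definition Rvec (nu : probability T R) (a : Alph) : R :=
  fine (nu (cyl [:: a] : set T)).

Definition condA (nu : probability T R) (B : set (int -> Alph)) : R :=
  fine (nu ((B `&` Aset th) : set T)) / fine (nu (Aset th : set T)).

(* Pi(nu) = mu : Pi(nu)([a_1..a_n]) = mu([a_1..a_n]) for all words *)
Definition desub_eq (nu mu : probability T R) : Prop :=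
  forall u : seq Alph,
    fine (mu (cyl u : set T)) =
    \sum_(vs <- choices th u) condA nu (Acyl th (zip u vs)).

(* probability choice: P a v = P_{v,a} *)
Definition prob_choice (P : Alph -> seq Alph -> R) : Prop :=
  forall a, (forall v, v \in th a -> 0 <= P a v) /\
            \sum_(v <- th a) P a v = 1.

Definition inMP (P : Alph -> seq Alph -> R) (nu : probability T R) : Prop :=
  forall a v, v \in th a ->
    condA nu (Acyl th [:: (a, v)]) =
    P a v * \sum_(u <- th a) condA nu (Acyl th [:: (a, u)]).

Definition MP (P : Alph -> seq Alph -> R) (a b : Alph) : R :=
  \sum_(v <- th b) P b v * (count_mem a v)%:R.

Definition lamP (mu : probability T R) (P : Alph -> seq Alph -> R) : R :=
  \sum_(a : Alph) fine (mu (cyl [:: a] : set T)) *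
                  \sum_(v <- th a) P a v * (size v)%:R.

Definition is_varthetaP (mu : probability T R) (P : Alph -> seq Alph -> R)
    (rho : probability T R) : Prop :=
  [/\ rho (Aset th : set T) = 1%E,
      (forall B : set T, measurable B -> rho (SA th @^-1` B) = rho B)
    & forall ws : seq (Alph * seq Alph),
        all (fun p => p.2 \in th p.1) ws ->
        fine (rho (Acyl th ws : set T)) =
        fine (mu (cyl (unzip1 ws) : set T)) * \prod_(p <- ws) P p.1 p.2].

Definition is_transfer (mu : probability T R) (P : Alph -> seq Alph -> R)
    (nu : probability T R) : Prop :=
  exists rho : probability T R, is_varthetaP mu P rho /\
    forall B : set T, measurable B ->
      nu B = (((lamP mu P)^-1)%:E *
        \int[rho]_(y in (Aset th : set T))
            (\sum_(i < retA th y) (\1_B (iter i (@shift Alph) y) : R))%:E)%E.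

End Measures.

(* Recognisability makes X_theta a Kakutani-Rokhlin tower over A: every y in
   X_theta is uniquely S^k y' with y' in an A-cylinder [(b, v)] and 0 <= k < |v|,
   and then y_0 = v_k.  By shift invariance each level of the tower over [(b, v)]
   has nu-mass nu(A) nu_A([(b, v)]), so nu([a]) = nu(A) sum_(b,v) |v|_a nu_A([(b, v)]).
   If Pi(nu) = mu and nu is in M[P], then nu_A([(b, v)]) = P_(v,b) mu([b]), whence
   R^nu = nu(A) M(P) R^mu, and summing over a gives nu(A) lambda_(mu,P) = 1.
   For nu = T_P(mu) the integral defining nu splits along the tower levels; on
   subsets of A only the bottom level contributes, so nu_A = vartheta_P(mu), which
   yields Pi(nu) = mu and nu in M[P].  Shift invariance of nu follows from the
   S_A-invariance of vartheta_P(mu) by telescoping along each tower.  The last claim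
   holds because lambda_(mu,P) only depends on R^mu. *)

From Pilot Require Import Defs.
From HB Require Import structures.
From mathcomp Require Import all_boot all_order all_algebra.
From mathcomp Require Import all_classical all_reals all_analysis.
From mathcomp Require Import zify ring lra.
Import Order.TTheory GRing.Theory Num.Theory.
Set Implicit Arguments.
Unset Strict Implicit.
Unset Printing Implicit Defensive.
Local Open Scope classical_set_scope.
Local Open Scope ring_scope.

Section Words.
Variable Alph : finType.
Variable th : Alph -> seq (seq Alph).
Implicit Types (y x : int -> Alph) (m : int) (n : nat).

Lemma size_window y m n : size (window y m n) = n.
Proof. by rewrite /window size_map size_iota. Qed.

Lemma nth_window y m n d j : (j < n)%N -> nth d (window y m n) j = y (m + j%:Z).
Proof. by move=> hj; rewrite /window (nth_map 0%N) ?size_iota // nth_iota. Qed.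

Lemma window_cat y m n1 n2 :
  window y m (n1 + n2) = window y m n1 ++ window y (m + n1%:Z) n2.
Proof.
rewrite /window iotaD map_cat; congr (_ ++ _).
rewrite add0n -(addn0 n1) iotaDl -map_comp; apply: eq_map => i /=.
by rewrite addn0 PoszD addrA.
Qed.

Lemma window_cons y m n : window y m n.+1 = y m :: window y (m + 1) n.
Proof.
by rewrite -add1n window_cat /window /= addr0.
Qed.

Lemma eq_window y y' m n : (forall t, (t < n)%N -> y (m + t%:Z) = y' (m + t%:Z)) ->
  window y m n = window y' m n.
Proof.
move=> h; apply: (@eq_from_nth _ (y 0)); rewrite ?size_window // => j hj.
by rewrite !nth_window // h.
Qed.

Lemma window_eq_at y y' m n : window y m n = window y' m n ->
  forall t, (t < n)%N -> y (m + t%:Z) = y' (m + t%:Z).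
Proof. by move=> h t ht; rewrite -(nth_window y m (y 0) ht) -(nth_window y' m (y 0) ht) h. Qed.

Lemma iter_shiftE i y : iter i (@Defs.shift Alph) y = fun t => y (t + i%:Z).
Proof.
elim: i => [|i IH] /=; first by apply/funext => t; rewrite addr0.
by rewrite IH; apply/funext => t; rewrite /Defs.shift -addrA; congr y; lia.
Qed.

Lemma subst_word_cons a u V W : V \in th a -> W \in subst_word th u ->
  V ++ W \in subst_word th (a :: u).
Proof. by move=> hV hW; rewrite /= (allpairs_f (fun v w => v ++ w)). Qed.

Lemma subst_word_consP a u Z : Z \in subst_word th (a :: u) ->
  exists V W, [/\ V \in th a, W \in subst_word th u & Z = V ++ W].
Proof.
by move=> /allpairsP [[V W] /= [hV hW ->]]; exists V, W.
Qed.

Lemma subst_word_cat u1 u2 W1 W2 : W1 \in subst_word th u1 ->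
  W2 \in subst_word th u2 -> W1 ++ W2 \in subst_word th (u1 ++ u2).
Proof.
elim: u1 W1 => [|a u1 IH] W1 /=.
  by rewrite inE => /eqP -> .
move=> /(subst_word_consP) [V [W [hV hW ->]]] h2.
by rewrite -catA; apply: subst_word_cons => //; apply: IH.
Qed.

Lemma subshift_iter i y : subshift th y -> subshift th (iter i (@Defs.shift Alph) y).
Proof.
move=> hy m n; rewrite iter_shiftE.
rewrite (_ : window _ m n = window y (m + i%:Z) n); first exact: hy.
apply: (@eq_from_nth _ (y 0)); rewrite ?size_window // => j hj.
by rewrite !nth_window //; congr y; lia.
Qed.

Hypothesis rs : is_rsubst th.

Lemma subst_word_exists u : exists W, W \in subst_word th u.
Proof.
elim: u => [|a u [W hW]]; first by exists [::]; rewrite inE.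
have [+ _ _] := rs a; case E: (th a) => [//|V s] _.
by exists (V ++ W); apply: subst_word_cons => //; rewrite E inE eqxx.
Qed.

Lemma size_subst_gt0 a v : v \in th a -> (0 < size v)%N.
Proof.
have [_ _ /allP h] := rs a => /h; by case: v.
Qed.

Lemma legal_infix u u' : legal th u -> infix u' u -> legal th u'.
Proof.
move=> [N [a [w [hw hi]]]] hi'; exists N, a, w; split => //.
exact: infix_trans hi' hi.
Qed.

Lemma legal_subst u W : legal th u -> W \in subst_word th u -> legal th W.
Proof.
move=> [N [a [w [hw /infixP [p [s Ew]]]]]] hW; subst w.
have [P hP] := subst_word_exists p; have [S hS] := subst_word_exists s.
exists N.+1, a, (P ++ W ++ S); split; last first.
  by apply/infixP; exists P, S.
rewrite /subst_iter iterS -/(subst_iter th N a); apply/flatten_mapP.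
exists (p ++ u ++ s) => //.
by apply: subst_word_cat => //; apply: subst_word_cat.
Qed.

Lemma window_infix y m n M N : M <= m -> m + n%:Z <= M + N%:Z ->
  infix (window y m n) (window y M N).
Proof.
move=> h1 h2.
have [a ha] : exists a : nat, m = M + a%:Z by exists (absz (m - M)%R); lia.
have [b hb] : exists b : nat, N = (a + (n + b))%N by exists (absz (M + N%:Z - m - n%:Z)%R); lia.
rewrite hb !window_cat -ha; apply/infixP; exists (window y M a), (window y (m + n%:Z) b).
by [].
Qed.

Definition blocks (v : int -> seq Alph) i n := flatten [seq v (i + k%:Z) | k <- iota 0 n].

Lemma blocks_cons v i n : blocks v i n.+1 = v i ++ blocks v (i + 1) n.
Proof.
rewrite /blocks /= addr0; congr (_ ++ _); rewrite -(addn0 1%N) iotaDl -map_comp.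
by congr flatten; apply: eq_map => k /=; rewrite -addrA; congr v; lia.
Qed.

Lemma decomp_window y x v c i : decomp th y x v c -> window y (c i) (size (v i)) = v i.
Proof.
move=> [_ _ _ _ h]; apply: (@eq_from_nth _ (x i)); rewrite ?size_window // => j hj.
by rewrite nth_window // h.
Qed.

Lemma decomp_blocks y x v c i n : decomp th y x v c ->
  c (i + n%:Z) = c i + (size (blocks v i n))%:Z /\
  window y (c i) (size (blocks v i n)) = blocks v i n.
Proof.
move=> D; elim: n i => [|n IH] i.
  by rewrite /blocks /= !addr0.
have [h1 h2] := IH (i + 1).
have [_ _ _ hc _] := D.
rewrite blocks_cons size_cat; split.
  by rewrite (_ : i + n.+1%:Z = i + 1 + n%:Z) ?h1 ?hc; lia.
by rewrite window_cat -hc h2 (decomp_window i D).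
Qed.

Lemma decomp_mem y x v c i : decomp th y x v c -> v i \in th (x i).
Proof. by case. Qed.

Lemma blocks_subst_word y x v c i n : decomp th y x v c ->
  blocks v i n \in subst_word th (window x i n).
Proof.
move=> D; elim: n i => [|n IH] i; first by rewrite /blocks /= inE.
rewrite blocks_cons window_cons; apply: subst_word_cons; last exact: IH.
exact: decomp_mem D.
Qed.

Lemma size_blocks_ge y x v c i n : decomp th y x v c -> (n <= size (blocks v i n))%N.
Proof.
move=> D; elim: n i => [|n IH] i //.
rewrite blocks_cons size_cat; have := size_subst_gt0 (decomp_mem i D); have := IH (i + 1).
move=> a b; exact: leq_add b a.
Qed.
(* The window [m, m + n) of y lies inside the concatenation of the blocks
   v_(-|m|), ..., v_(|m + n| - 1), a substitution image of a legal word of x. *)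
Lemma decomp_subshift y x v c : decomp th y x v c -> subshift th y.
Proof.
move=> D m n; have [hx _ c0 _ _] := D.
have [k ek] : exists k, k = absz m by eexists.
have [l el] : exists l, l = absz (m + n%:Z) by eexists.
have [e1 _] := decomp_blocks (- k%:Z) k D.
have [e2 hw] := decomp_blocks (- k%:Z) (k + l) D.
have [e3 _] := decomp_blocks 0 l D.
have s1 := size_blocks_ge (- k%:Z) k D.
have s3 := size_blocks_ge 0 l D.
apply: (legal_infix (legal_subst (hx _ _) (blocks_subst_word (- k%:Z) (k + l) D))).
rewrite -hw; apply: window_infix.
  by move: e1; rewrite addNr c0; lia.
by rewrite -e2 (_ : - k%:Z + (k + l)%:Z = 0 + l%:Z) ?e3 ?c0; lia.
Qed.

End Words.

Definition int_of_nat (k : nat) : int := if odd k then Negz (k./2) else Posz (k./2).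

Definition nat_of_int (i : int) : nat := match i with Posz k => k.*2 | Negz k => k.*2.+1 end.

Lemma nat_of_intK i : int_of_nat (nat_of_int i) = i.
Proof.
case: i => k /=; rewrite /int_of_nat.
  by rewrite odd_double doubleK.
by rewrite /= odd_double /=; congr Negz; exact: (half_bit_double k true).
Qed.

Lemma nat_of_int_lt i M : (absz i <= M)%N -> (nat_of_int i < M.*2.+2)%N.
Proof. case: i => k /=; rewrite -!muln2; lia. Qed.

Definition unbounded (I : set nat) := forall K, exists N, (K <= N)%N /\ I N.

(* Compactness of F^Z by a diagonal argument: stage k pins down the coordinate
   int_of_nat k along an unbounded set of indices. *)
Section Diagonal.
Variables (B : choiceType) (F : seq B) (s : nat -> int -> B).
Hypothesis hF : forall N i, s N i \in F.

Lemma unbounded_pigeonhole (I : set nat) (f : nat -> B) :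
  unbounded I -> (forall N, f N \in F) -> exists b, unbounded (I `&` [set N | f N = b]).
Proof.
move=> hI hf; apply: contrapT => hn.
have hK : forall b, exists K, forall N, (K <= N)%N -> ~ (I N /\ f N = b).
  move=> b; have /existsNP [K hK] : ~ unbounded (I `&` [set N | f N = b]).
    by move=> h; apply: hn; exists b.
  by exists K => N hN [h1 h2]; apply: hK; exists N.
have [Kf hKf] := choice hK.
have [N [hN IN]] := hI (\max_(b <- F) Kf b).
apply: (hKf (f N) N); last by split.
have := @leq_bigmax_seq B F xpredT Kf (f N) (hf N) isT.
move=> h; exact: leq_trans h hN.
Qed.

Variable b0 : B.

Definition limit_value (I : set nat) k :=
  xget b0 [set b | unbounded (I `&` [set N | s N (int_of_nat k) = b])].

Fixpoint stage k : set nat :=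
  if k is k'.+1 then stage k' `&` [set N | s N (int_of_nat k') = limit_value (stage k') k']
  else setT.

Lemma stage_unbounded k : unbounded (stage k).
Proof.
elim: k => [|k IH] /=; first by move=> K; exists K.
pose Q := [set b | unbounded (stage k `&` [set N | s N (int_of_nat k) = b])].
by apply: (xgetPex b0 (P := Q)); exact: unbounded_pigeonhole.
Qed.

Lemma stageP k j N : (j < k)%N -> stage k N -> s N (int_of_nat j) = limit_value (stage j) j.
Proof.
elim: k => [//|k IH] /=; rewrite ltnS leq_eqVlt => /orP [/eqP ->|hj] [h1 h2] //.
exact: IH.
Qed.

Definition diagonal_limit (i : int) := limit_value (stage (nat_of_int i)) (nat_of_int i).

Lemma diagonal_limitP M K :
  exists N, (K <= N)%N /\ forall i, (absz i <= M)%N -> s N i = diagonal_limit i.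
Proof.
have [N [hN hs]] := stage_unbounded M.*2.+2 K; exists N; split => // i hi.
by rewrite -{1}(nat_of_intK i) (stageP _ hs) // nat_of_int_lt.
Qed.

End Diagonal.

Lemma diagonal_extraction (B : choiceType) (F : seq B) (s : nat -> int -> B) :
  (forall N i, s N i \in F) ->
  exists p : int -> B, forall M K, exists N, (K <= N)%N /\
     forall i, (absz i <= M)%N -> s N i = p i.
Proof.
move=> hF; exists (diagonal_limit s (s 0%N 0)) => M K; exact: diagonal_limitP.
Qed.

Definition block_start (A : Type) (v : int -> seq A) (i : int) : int :=
  match i with
  | Posz n => (\sum_(k < n) size (v (Posz k)))%:Z
  | Negz n => - (\sum_(k < n.+1) size (v (Negz k)))%:Z
  end.

Lemma block_start0 (A : Type) (v : int -> seq A) : block_start v 0 = 0.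
Proof. by rewrite /= big_ord0. Qed.

Lemma block_startS (A : Type) (v : int -> seq A) i :
  block_start v (i + 1) = block_start v i + (size (v i))%:Z.
Proof.
case: i => n.
  by rewrite /= -PoszD addn1 /= big_ord_recr.
case: n => [|n].
  have -> : Negz 0 + 1 = 0 by [].
  by rewrite /= big_ord_recr !big_ord0 /=; lia.
have -> : Negz n.+1 + 1 = Negz n by rewrite !NegzE; lia.
by rewrite /= [in RHS]big_ord_recr /=; lia.
Qed.

Lemma eq_int_fun_increments (f g : int -> int) : f 0 = g 0 ->
  (forall i, f (i + 1) - f i = g (i + 1) - g i) -> f = g.
Proof.
move=> h0 hs; apply/funext => i.
have hP : forall n : nat, f n%:Z = g n%:Z.
  elim=> [//|n IH]; have := hs n%:Z; rewrite -PoszD addn1 IH; lia.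
case: i => [n|n]; first exact: hP.
elim: n => [|n IH].
  by have := hs (Negz 0); rewrite (_ : Negz 0 + 1 = 0) //; lia.
have := hs (Negz n.+1); rewrite (_ : Negz n.+1 + 1 = Negz n); last by rewrite !NegzE; lia.
lia.
Qed.

Lemma block_start_agree (A : Type) (v v' : int -> seq A) i :
  (forall k, (absz k <= absz i)%N -> v k = v' k) -> block_start v i = block_start v' i.
Proof.
case: i => n h /=.
  by congr (Posz _); apply: eq_bigr => k _; rewrite h //= ltnW.
by congr (- Posz _); apply: eq_bigr => k _; rewrite h //=.
Qed.

Section AcylClosed.
Variable Alph : finType.
Variable th : Alph -> seq (seq Alph).

Lemma decomp_block_start y x v c : decomp th y x v c -> c = block_start v.
Proof.
case=> _ _ h0 hs _; apply: eq_int_fun_increments; first by rewrite block_start0.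
by move=> i; rewrite hs block_startS; lia.
Qed.

Lemma decomp_limit y x v (z xs : nat -> int -> Alph) (vs : nat -> int -> seq Alph)
    (cs : nat -> int -> int) :
  (forall N, decomp th (z N) (xs N) (vs N) (cs N)) ->
  (forall N t, (absz t <= N)%N -> z N t = y t) ->
  (forall M K, exists N, (K <= N)%N /\
     forall i, (absz i <= M)%N -> xs N i = x i /\ vs N i = v i) ->
  decomp th y x v (block_start v).
Proof.
move=> D hz agree; split.
- move=> m n; have [N [_ hs]] := agree (absz m + n)%N 0%N.
  have [hx _ _ _ _] := D N.
  rewrite (_ : window x m n = window (xs N) m n); first exact: hx.
  apply: eq_window => t ht; rewrite (proj1 (hs _ _)) //; lia.
- move=> i; have [N [_ hs]] := agree (absz i) 0%N; have [<- <-] := hs i (leqnn _).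
  exact: (decomp_mem i (D N)).
- exact: block_start0.
- exact: block_startS.
move=> i j hj.
have [N [hK hs]] := agree (absz i) (absz (block_start v i + j%:Z)).
have ec2 : block_start (vs N) i = block_start v i.
  by apply: block_start_agree => k hk; have [_ ->] := hs k hk.
have [hxi hvi] := hs i (leqnn _).
have [_ _ _ _ hy] := D N.
rewrite -(hz N); last by lia.
rewrite -ec2 -(decomp_block_start (D N)) -hxi -hvi; apply: hy.
by rewrite hvi.
Qed.

Lemma Acyl_closed ws y :
  (forall N : nat, exists z, Acyl th ws z /\ forall t : int, (absz t <= N)%N -> z t = y t) ->
  Acyl th ws y.
Proof.
move=> hN.
have : forall N : nat, exists q : (int -> Alph) * (int -> Alph) * (int -> seq Alph) * (int -> int),
   [/\ decomp th q.1.1.1 q.1.1.2 q.1.2 q.2,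
       [seq (q.1.1.2 i%:Z, q.1.2 i%:Z) | i <- iota 0 (size ws)] = ws &
       forall t : int, (absz t <= N)%N -> q.1.1.1 t = y t].
  move=> N; have [z [[x [v [c [D P]]]] hz]] := hN N.
  by exists (z, x, v, c).
move=> /choice [q hq].
pose xf N := (q N).1.1.2; pose vf N := (q N).1.2.
pose F := flatten [seq [seq (a, w) | w <- th a] | a <- enum Alph].
have hF : forall N i, (xf N i, vf N i) \in F.
  move=> N i; have [D _ _] := hq N.
  apply/flatten_mapP; exists (xf N i); first by rewrite mem_enum.
  by apply: map_f; exact: (decomp_mem i D).
have [p hp] := diagonal_extraction hF.
have agree : forall M K, exists N, (K <= N)%N /\
    forall i, (absz i <= M)%N -> xf N i = (p i).1 /\ vf N i = (p i).2.
  by move=> M K; have [N [hK hs]] := hp M K; exists N; split => // i hi; rewrite -(hs i hi).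
exists (fun i => (p i).1), (fun i => (p i).2), (block_start (fun i => (p i).2)); split.
  apply: (decomp_limit (z := fun N => (q N).1.1.1) (cs := fun N => (q N).2) _ _ agree).
    by move=> N; have [] := hq N.
  by move=> N t ht; have [_ _ ->] := hq N.
have [N [_ hs]] := agree (size ws) 0%N.
transitivity [seq (xf N i%:Z, vf N i%:Z) | i <- iota 0 (size ws)]; last by have [_ E _] := hq N.
apply/eq_in_map => i; rewrite mem_iota add0n => /andP [_ hi].
by have [-> ->] := hs i%:Z (ltnW hi).
Qed.

End AcylClosed.

Definition unshift (Alph : Type) (k : nat) (y : int -> Alph) : int -> Alph := fun n => y (n - k%:Z).

Section Recognisable.
Variable Alph : finType.
Variable th : Alph -> seq (seq Alph).
Hypothesis rs : is_rsubst th.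
Hypothesis rec : recognisable th.

Lemma Acyl1P y b v : Acyl th [:: (b, v)] y <->
  exists x w c, [/\ decomp th y x w c, x 0 = b & w 0 = v].
Proof.
split.
  by move=> [x [w [c [D /= [<- <-]]]]]; exists x, w, c.
by move=> [x [w [c [D <- <-]]]]; exists x, w, c.
Qed.

Lemma unshift0 (y : int -> Alph) : unshift 0 y = y.
Proof. by apply/funext => n; rewrite /unshift subr0. Qed.

Lemma tower_uniq y b v k b' v' k' : subshift th y ->
  Acyl th [:: (b, v)] (unshift k y) -> Acyl th [:: (b', v')] (unshift k' y) ->
  (k < size v)%N -> (k' < size v')%N -> [/\ b = b', v = v' & k = k'].
Proof.
move=> hy /Acyl1P [x [w [c [D hb hv]]]] /Acyl1P [x' [w' [c' [D' hb' hv']]]] hk hk'.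
have [x0 [v0 [k0 [_ hu]]]] := rec hy.
have d1 : decomp_at th y x w k by split; [rewrite hv|exists c].
have d2 : decomp_at th y x' w' k' by split; [rewrite hv'|exists c'].
have [e1 e2 e3] := hu _ _ _ d1; have [e1' e2' e3'] := hu _ _ _ d2.
by split; [rewrite -hb -hb' e1 e1'|rewrite -hv -hv' e2 e2'|rewrite e3 e3'].
Qed.

Lemma Acyl_Aset ws y : Acyl th ws y -> Aset th y.
Proof. by move=> [x [w [c [D _]]]]; exists x, w, c. Qed.

Lemma Acyl_subshift ws y : Acyl th ws y -> subshift th y.
Proof. by move=> [x [w [c [D _]]]]; exact: decomp_subshift D. Qed.

Lemma Acyl1_mem y b v : Acyl th [:: (b, v)] y -> v \in th b.
Proof. by move=> /Acyl1P [x [w [c [D <- <-]]]]; exact: decomp_mem D. Qed.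

Lemma Acyl1_uniq y b v b' v' :
  Acyl th [:: (b, v)] y -> Acyl th [:: (b', v')] y -> b = b' /\ v = v'.
Proof.
move=> h1 h2; have hy := Acyl_subshift h1.
have s1 := size_subst_gt0 rs (Acyl1_mem h1); have s2 := size_subst_gt0 rs (Acyl1_mem h2).
rewrite -(unshift0 y) in h1 h2.
by have [-> -> _] := tower_uniq hy h1 h2 s1 s2.
Qed.

Lemma Aset_Acyl1 y : Aset th y -> exists b v, Acyl th [:: (b, v)] y.
Proof. by move=> [x [w [c D]]]; exists (x 0), (w 0); apply/Acyl1P; exists x, w, c. Qed.

Lemma Acyl_nil : Acyl th [::] = Aset th.
Proof.
apply/seteqP; split => y; first exact: Acyl_Aset.
by move=> [x [w [c D]]]; exists x, w, c.
Qed.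

Lemma tower_exists y : subshift th y ->
  exists b v k, [/\ Acyl th [:: (b, v)] (unshift k y), v \in th b & (k < size v)%N].
Proof.
move=> hy; have [x [w [k [[hk [c D]] _]]]] := rec hy.
exists (x 0), (w 0), k; split => //; first by apply/Acyl1P; exists x, w, c.
exact: decomp_mem D.
Qed.

Lemma retA_Acyl1 y b v : Acyl th [:: (b, v)] y -> retA th y = size v.
Proof.
move=> h; rewrite /retA.
set S := [set n | _].
have : S (xget 0%N S).
  apply: xgetPex; move: h => /Acyl1P [x [w [c [D _ _]]]].
  by exists (size (w 0)); exists x, w, c.
move=> [x [w [c [D ->]]]].
have h' : Acyl th [:: (x 0, w 0)] y by apply/Acyl1P; exists x, w, c.
by have [_ ->] := Acyl1_uniq h' h.
Qed.

Lemma Acyl1_iter_shift_notin_Aset y b v i : Acyl th [:: (b, v)] y -> (0 < i < size v)%N ->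
  ~ Aset th (iter i (@Defs.shift Alph) y).
Proof.
move=> h /andP [hi0 hi] hz.
have [b' [v' h2]] := Aset_Acyl1 hz.
have hzX := Acyl_subshift h2.
rewrite -(unshift0 (iter i _ y)) in h2.
have h1 : Acyl th [:: (b, v)] (unshift i (iter i (@Defs.shift Alph) y)).
  rewrite iter_shiftE (_ : unshift i _ = y) //.
  by apply/funext => n; rewrite /unshift subrK.
have [_ _ e] := tower_uniq hzX h1 h2 hi (size_subst_gt0 rs (@Acyl1_mem _ _ _ h2)).
by move: hi0; rewrite e.
Qed.

End Recognisable.

Section Measurability.
Variables (Alph : finType) (a0 : Alph).
Local Notation T := (SS Alph a0).

Lemma measurable_window_eq m (u : seq Alph) :
  measurable ([set y | window y m (size u) = u] : set T).
Proof. by apply: sub_sigma_algebra; exists m, u. Qed.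

Lemma measurable_window (Q : seq Alph -> Prop) m n :
  measurable ([set y | Q (window y m n)] : set T).
Proof.
pose F (k : nat) : set T := match unpickle k with
  | Some u => if `[< Q u /\ size u = n >] then [set y | window y m (size u) = u] else set0
  | None => set0 end.
have -> : [set y | Q (window y m n)] = \bigcup_k F k.
  apply/seteqP; split => y /=.
    move=> hQ; exists (pickle (window y m n)) => //.
    rewrite /F pickleK; case: asboolP => [_|[]]; first by rewrite size_window.
    by rewrite size_window.
  move=> [k _]; rewrite /F; case: (unpickle k) => [u|//].
  by case: asboolP => [[hQ hs] /= hw|//]; rewrite -hs hw.
apply: bigcupT_measurable => k; rewrite /F.
case: (unpickle k) => [u|//]; case: asboolP => _ //; exact: measurable_window_eq.
Qed.

Lemma measurable_subshift (th : Alph -> seq (seq Alph)) : measurable (subshift th : set T).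
Proof.
have -> : subshift th =
    \bigcap_k \bigcap_n ([set y | legal th (window y (int_of_nat k) n)] : set T).
  apply/seteqP; split => y /=; first by move=> h k _ n _; exact: h.
  by move=> h m n; have := h (nat_of_int m) I n I; rewrite nat_of_intK.
apply: bigcapT_measurable => k; apply: bigcapT_measurable => n; exact: measurable_window.
Qed.

Lemma measurable_Acyl (th : Alph -> seq (seq Alph)) ws : measurable (Acyl th ws : set T).
Proof.
(* Acyl th ws is closed, hence the intersection of its finite-window approximations. *)
pose Q (N : nat) (u : seq Alph) := exists z, Acyl th ws z /\ window z (- N%:Z) (N + N).+1 = u.
have -> : Acyl th ws = \bigcap_N ([set y | Q N (window y (- N%:Z) (N + N).+1)] : set T).
  apply/seteqP; split => y /=; first by move=> h N _; exists y.
  move=> h; apply: Acyl_closed => N; have [z [hz hw]] := h N I.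
  exists z; split => // t ht.
  have := window_eq_at hw (t := absz (t + N%:Z)%R).
  by rewrite (_ : - N%:Z + (absz (t + N%:Z)%R)%:Z = t); [apply; lia|lia].
apply: bigcapT_measurable => N; exact: measurable_window.
Qed.

Lemma measurable_translate (f : T -> T) (d : int) : (forall y t, f y t = y (t + d)) ->
  measurable_fun setT f.
Proof.
move=> hf; apply: (@measurability _ _ T T setT f (@cylinders Alph a0) erefl).
move=> _ [B [m [u ->]] <-].
have e y : window (f y) m (size u) = window y (m + d) (size u).
  apply/(@eq_from_nth _ a0); rewrite ?size_window // => j hj.
  by rewrite !nth_window // hf; congr y; lia.
rewrite setTI (_ : _ @^-1` _ = [set y | window y (m + d) (size u) = u]).
  exact: measurable_window_eq.
by apply/seteqP; split => y /=; rewrite e.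
Qed.

Lemma measurable_translate_preimage (f : T -> T) (d : int) (B : set T) :
  (forall y t, f y t = y (t + d)) -> measurable B -> measurable (f @^-1` B).
Proof.
move=> hf mB; rewrite -[f @^-1` B]setTI; exact: (measurable_translate hf).
Qed.

End Measurability.

Lemma bigsetU_seqP (T : Type) (I : eqType) (s : seq I) (F : I -> set T) x :
  (\big[setU/set0]_(i <- s) F i) x <-> exists i, i \in s /\ F i x.
Proof.
elim: s => [|i s IH]; rewrite ?big_nil ?big_cons; first by split => // [[? []]].
split.
  case=> [h|/IH [j [hj hx]]]; first by exists i; rewrite inE eqxx.
  by exists j; rewrite inE hj orbT.
move=> [j []]; rewrite inE => /orP [/eqP <-|hj] hx; first by left.
by right; apply/IH; exists j.
Qed.

Section FiniteMeasure.
Variables (d : measure_display) (T : measurableType d) (R : realType).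
Variable m : probability T R.

Definition mreal (B : set T) : R := fine (m B).

Lemma mrealE B : measurable B -> m B = (mreal B)%:E.
Proof. by move=> mB; rewrite /mreal fineK // fin_num_measure. Qed.

Lemma mreal_ge0 B : 0 <= mreal B.
Proof. by rewrite /mreal fine_ge0 // measure_ge0. Qed.

Lemma mreal_setT : mreal setT = 1.
Proof. by rewrite /mreal probability_setT. Qed.

Lemma mrealU A B : measurable A -> measurable B -> A `&` B = set0 ->
  mreal (A `|` B) = mreal A + mreal B.
Proof.
move=> mA mB hAB; rewrite /mreal measureU // fineD // fin_num_measure //.
Qed.

Lemma mreal_bigsetU (I : eqType) (s : seq I) (F : I -> set T) :
  uniq s -> (forall i, measurable (F i)) ->
  (forall i j, i \in s -> j \in s -> i != j -> F i `&` F j = set0) ->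
  mreal (\big[setU/set0]_(i <- s) F i) = \sum_(i <- s) mreal (F i).
Proof.
elim: s => [|i s IH] /=; first by rewrite !big_nil /mreal measure0.
move=> /andP [his us] mF hd; rewrite !big_cons mrealU //.
- rewrite IH // => j k hj hk; apply: hd; rewrite inE ?hj ?hk orbT //.
- apply: bigsetU_measurable => j _; exact: mF.
apply/seteqP; split => // x [hx /bigsetU_seqP [j [hj hjx]]].
have hij : i != j by apply: contraNneq his => ->.
by rewrite -(hd i j _ _ hij); [split| rewrite inE eqxx | rewrite inE hj orbT].
Qed.

Lemma mreal_le A B : measurable A -> measurable B -> A `<=` B -> mreal A <= mreal B.
Proof.
move=> mA mB hAB; apply: fine_le; rewrite ?fin_num_measure //.
by apply: le_measure => //; rewrite inE.
Qed.

Lemma mreal_setI_full X E : measurable X -> measurable E -> mreal X = 1 ->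
  mreal E = mreal (E `&` X).
Proof.
move=> mX mE hX.
have e : E = (E `&` X) `|` (E `&` ~` X) by rewrite -setIUr setUv setIT.
have mEX : measurable (E `&` X) by exact: measurableI.
have mEnX : measurable (E `&` ~` X) by apply: measurableI => //; exact: measurableC.
rewrite {1}e mrealU //; last by rewrite setIACA setICr !setI0.
rewrite -[X in _ = X]addr0; congr (_ + _).
apply/eqP; rewrite eq_le mreal_ge0 andbT.
have h1 : mreal (E `&` ~` X) <= mreal (~` X).
  apply: mreal_le => //; first exact: measurableC.
have h2 : mreal X + mreal (~` X) = 1.
  by rewrite -mrealU ?setUv ?mreal_setT ?setICr //; exact: measurableC.
lra.
Qed.

End FiniteMeasure.

Lemma sumr_const_seq (R : ringType) (I : Type) (s : seq I) (c : R) :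
  \sum_(i <- s) c = (size s)%:R * c.
Proof.
elim: s => [|i s IH]; first by rewrite big_nil mul0r.
by rewrite big_cons IH /= -{1}(mul1r c) -mulrDl -natr1 addrC.
Qed.

Lemma count_nth_iota (Alph : eqType) (a : Alph) (v : seq Alph) :
  count (fun k => nth a v k == a) (iota 0 (size v)) = count_mem a v.
Proof.
rewrite -{3}(mkseq_nth a v) /mkseq count_map; apply: eq_count => k //.
Qed.

Section Tower.
Variables (Alph : finType) (a0 : Alph) (R : realType).
Variable th : Alph -> seq (seq Alph).
Hypothesis rs : is_rsubst th.
Hypothesis rec : recognisable th.
Local Notation T := (SS Alph a0).

Lemma measurable_Aset : measurable (Aset th : set T).
Proof. rewrite -Acyl_nil; exact: measurable_Acyl. Qed.

Lemma measurable_iter_shift_preimage i (B : set T) : measurable B ->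
  measurable ((iter i (@Defs.shift Alph) : T -> T) @^-1` B).
Proof. by apply: (measurable_translate_preimage (d := i%:Z)) => y t; rewrite iter_shiftE. Qed.

Lemma measurable_unshift_preimage k (B : set T) : measurable B ->
  measurable ((unshift k : T -> T) @^-1` B).
Proof. by apply: (measurable_translate_preimage (d := - k%:Z)) => y t. Qed.

Lemma measurable_cyl1 a : measurable (cyl [:: a] : set T).
Proof. rewrite /cyl; exact: measurable_window_eq. Qed.

Lemma mreal_Aset_pieces (m : probability T R) (E : set T) : measurable E ->
  mreal m (E `&` Aset th) =
  \sum_(b <- enum Alph) \sum_(v <- th b) mreal m (Acyl th [:: (b, v)] `&` E).
Proof.
move=> mE.
have mAE : forall b v, measurable (Acyl th [:: (b, v)] `&` E : set T).
  by move=> b v; apply: measurableI => //; exact: measurable_Acyl.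
have -> : E `&` Aset th = \big[setU/set0]_(b <- enum Alph) \big[setU/set0]_(v <- th b)
    (Acyl th [:: (b, v)] `&` E : set T).
  apply/seteqP; split => y.
    move=> [hE /Aset_Acyl1 [b [v h]]]; apply/bigsetU_seqP; exists b; split; first by rewrite mem_enum.
    by apply/bigsetU_seqP; exists v; split => //; exact: Acyl1_mem h.
  move=> /bigsetU_seqP [b [_ /bigsetU_seqP [v [_ [h hE]]]]]; split => //; exact: Acyl_Aset h.
rewrite mreal_bigsetU; [ | exact: enum_uniq | | ]; last first.
- move=> b b' _ _ hb; apply/seteqP; split => // y [/bigsetU_seqP [v [_ [h1 _]]] /bigsetU_seqP [v' [_ [h2 _]]]].
  by have [e _] := Acyl1_uniq rs rec h1 h2; move: hb; rewrite e eqxx.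
- by move=> b; apply: bigsetU_measurable => v _; exact: mAE.
apply: eq_bigr => b _; rewrite mreal_bigsetU; [ | by have [] := rs b | exact: mAE | ] => //.
move=> v v' _ _ hv; apply/seteqP; split => // y [[h1 _] [h2 _]].
by have [_ e] := Acyl1_uniq rs rec h1 h2; move: hv; rewrite e eqxx.
Qed.

Variable nu : probability T R.
Hypothesis hnu : inM th nu.

Lemma unshift_invariant k B : measurable B -> nu ((unshift k : T -> T) @^-1` B) = nu B.
Proof.
elim: k B => [|k IH] B mB.
  by rewrite (_ : _ @^-1` B = B) //; apply/seteqP; split => y /=; rewrite unshift0.
have [_ hinv] := hnu.
have e1 : unshift k.+1 = unshift 1 \o unshift k :> (T -> T).
  by apply/funext => y; apply/funext => n; rewrite /= /unshift; congr y; lia.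
have e2 : unshift 1 \o @Defs.shift Alph = id :> (T -> T).
  by apply/funext => y; apply/funext => n; rewrite /= /unshift /Defs.shift subrK.
rewrite e1 comp_preimage IH; last exact: measurable_unshift_preimage.
by rewrite -[LHS](hinv _ (measurable_unshift_preimage 1 mB)) -comp_preimage e2.
Qed.

Lemma mreal_subshift : mreal nu (subshift th) = 1.
Proof. by have [h _] := hnu; rewrite /mreal h. Qed.

(* The k-th level S^k [(b, v)] of the tower over [(b, v)], intersected with X_theta. *)
Definition tower_level b v k : set T :=
  (unshift k : T -> T) @^-1` Acyl th [:: (b, v)] `&` subshift th.

Lemma measurable_tower_level b v k : measurable (tower_level b v k).
Proof.
apply: measurableI; last exact: measurable_subshift.
by apply: measurable_unshift_preimage; exact: measurable_Acyl.
Qed.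

Lemma tower_level_uniq b v k b' v' k' y : tower_level b v k y -> tower_level b' v' k' y ->
  (k < size v)%N -> (k' < size v')%N -> [/\ b = b', v = v' & k = k'].
Proof. by move=> [h1 hy] [h2 _]; exact: (tower_uniq rec hy h1 h2). Qed.

Lemma tower_level_letter b v k y a : tower_level b v k y -> (k < size v)%N ->
  (y 0 == a) = (nth a v k == a).
Proof.
move=> [/Acyl1P [x [w [c [[_ _ c0 _ hd] _ <-]]]] _] hk.
have := hd 0 k hk; rewrite c0 add0r /unshift subrr => ->.
by rewrite (set_nth_default a).
Qed.

Lemma mreal_tower_level b v k : mreal nu (tower_level b v k) = mreal nu (Acyl th [:: (b, v)]).
Proof.
rewrite /tower_level -mreal_setI_full //; first last.
- exact: mreal_subshift.
- by apply: measurable_unshift_preimage; exact: measurable_Acyl.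
- exact: measurable_subshift.
by rewrite /mreal unshift_invariant //; exact: measurable_Acyl.
Qed.

Definition positions (a : Alph) v := [seq k <- iota 0 (size v) | nth a v k == a].
Definition letter_levels a b v := \big[setU/set0]_(k <- positions a v) tower_level b v k.
Definition letter_column a b := \big[setU/set0]_(v <- th b) letter_levels a b v.
Definition letter_tower a := \big[setU/set0]_(b <- enum Alph) letter_column a b.

Lemma letter_levelsP a b v y : letter_levels a b v y ->
  exists k, (k < size v)%N /\ tower_level b v k y.
Proof.
move=> /bigsetU_seqP [k [hk hy]]; exists k; split => //.
by move: hk; rewrite mem_filter mem_iota => /andP [_ /andP [_]].
Qed.

Lemma letter_columnP a b y : letter_column a b y ->
  exists v k, (k < size v)%N /\ tower_level b v k y.
Proof. by move=> /bigsetU_seqP [v [_ /letter_levelsP [k hk]]]; exists v, k. Qed.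

Lemma cyl1_tower a : cyl [:: a] `&` subshift th = letter_tower a.
Proof.
apply/seteqP; split => y.
  move=> [/= hy0 hX]; have [b [v [k [h hv hk]]]] := tower_exists rec hX.
  have hpc : tower_level b v k y by [].
  apply/bigsetU_seqP; exists b; split; first by rewrite mem_enum.
  apply/bigsetU_seqP; exists v; split => //.
  apply/bigsetU_seqP; exists k; split => //.
  rewrite mem_filter mem_iota /= hk andbT -(tower_level_letter a hpc hk).
  move: hy0; rewrite /window /= => -[e]; apply/eqP; rewrite -e; by congr y.
move=> /bigsetU_seqP [b [_ /bigsetU_seqP [v [_ /bigsetU_seqP [k [hk hpc]]]]]].
split; last by case: hpc.
move: hk; rewrite mem_filter mem_iota => /andP [ha /andP [_ hk]].
have := tower_level_letter a hpc hk; rewrite ha => /eqP e.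
rewrite /cyl /window /=; rewrite -e; by congr [:: y _].
Qed.

Lemma mreal_cyl1_tower a : mreal nu (cyl [:: a]) =
  \sum_(b <- enum Alph) \sum_(v <- th b) (count_mem a v)%:R * mreal nu (Acyl th [:: (b, v)]).
Proof.
rewrite (mreal_setI_full (measurable_subshift th) (measurable_cyl1 a) mreal_subshift).
have mlevels : forall b v, measurable (letter_levels a b v).
  by move=> b v; apply: bigsetU_measurable => k _; exact: measurable_tower_level.
have mcolumn : forall b, measurable (letter_column a b).
  by move=> b; apply: bigsetU_measurable => v _; exact: mlevels.
rewrite cyl1_tower /letter_tower mreal_bigsetU; [ | exact: enum_uniq | exact: mcolumn | ]; last first.
  move=> b b' _ _ hbb'; apply/seteqP; split => // y.
  move=> [/letter_columnP [v [k [hk h1]]] /letter_columnP [v' [k' [hk' h2]]]].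
  by have [e _ _] := tower_level_uniq h1 h2 hk hk'; move: hbb'; rewrite e eqxx.
apply: eq_bigr => b _.
rewrite /letter_column mreal_bigsetU; [ | by have [] := rs b | exact: mlevels | ]; last first.
  move=> v v' _ _ hvv'; apply/seteqP; split => // y.
  move=> [/letter_levelsP [k [hk h1]] /letter_levelsP [k' [hk' h2]]].
  by have [_ e _] := tower_level_uniq h1 h2 hk hk'; move: hvv'; rewrite e eqxx.
apply: eq_bigr => v _.
rewrite /letter_levels mreal_bigsetU;
  [ | by apply: filter_uniq; exact: iota_uniq | exact: measurable_tower_level | ]; last first.
  move=> k k'; rewrite !mem_filter !mem_iota => /andP [_ /andP [_ hk]] /andP [_ /andP [_ hk']] hkk'.
  apply/seteqP; split => // y [h1 h2].
  by have [_ _ e] := tower_level_uniq h1 h2 hk hk'; move: hkk'; rewrite e eqxx.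
under eq_bigr do rewrite mreal_tower_level.
by rewrite sumr_const_seq size_filter count_nth_iota.
Qed.

End Tower.

Lemma allpairs_seq1 (S U W : eqType) (f : S -> U -> W) (s : seq S) (z : U) :
  [seq f x y | x <- s, y <- [:: z]] = [seq f x z | x <- s].
Proof. by elim: s => //= x s ->. Qed.

Lemma sumr_count_mem (Alph : finType) (R : ringType) (s : seq Alph) :
  \sum_(a : Alph) (count_mem a s)%:R = (size s)%:R :> R.
Proof.
elim: s => [|x s IH]; first by rewrite big1.
rewrite /= (eq_bigr (fun a => (x == a)%:R + (count_mem a s)%:R)); last by move=> a _; rewrite natrD.
rewrite big_split IH /= (bigD1 x) //= eqxx big1; last first.
  by move=> b hb; rewrite eq_sym (negbTE hb).
by rewrite addr0 -natr1 addrC.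
Qed.

Section Desubstitution.
Variables (Alph : finType) (a0 : Alph) (R : realType).
Variable th : Alph -> seq (seq Alph).
Hypothesis rs : is_rsubst th.
Hypothesis rec : recognisable th.
Local Notation T := (SS Alph a0).

Lemma cyl_nil : (cyl [::] : set T) = setT.
Proof. by apply/seteqP; split. Qed.

Lemma choices_seq1 b : choices th [:: b] = [seq [:: v] | v <- th b].
Proof. by rewrite /choices /= allpairs_seq1. Qed.

Lemma sum_mreal_cyl1 (m : probability T R) : \sum_(a : Alph) mreal m (cyl [:: a]) = 1.
Proof.
rewrite -big_enum -mreal_bigsetU //; last first.
- move=> a b _ _ hab; apply/seteqP; split => // y [h1 h2].
  move: h1 h2; rewrite /cyl /window /= => -[e1] [e2]; by move: hab; rewrite -e1 -e2 eqxx.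
- move=> a; exact: measurable_cyl1.
- exact: enum_uniq.
rewrite (_ : \big[setU/set0]_(a <- enum Alph) cyl [:: a] = setT) ?mreal_setT //.
apply/seteqP; split => // y _; apply/bigsetU_seqP; exists (y 0); split; first by rewrite mem_enum.
by rewrite /cyl /window /=; congr [:: y _].
Qed.

Variables (mu nu : probability T R) (P : Alph -> seq Alph -> R).
Hypothesis hnu : inM th nu.
Hypothesis hdes : desub_eq th nu mu.
Hypothesis hMP : inMP th P nu.

Lemma mreal_Aset_neq0 : mreal nu (Aset th) != 0.
Proof.
apply/eqP => e; have := hdes [::].
rewrite /= big_seq1 /condA Acyl_nil setIid cyl_nil probability_setT /=.
by rewrite -/(mreal nu (Aset th)) e invr0 mulr0 => /eqP; rewrite oner_eq0.
Qed.

Lemma mreal_Acyl1_condA b v :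
  mreal nu (Acyl th [:: (b, v)]) = mreal nu (Aset th) * condA th nu (Acyl th [:: (b, v)]).
Proof.
rewrite /condA setIidl; last by move=> y; exact: Acyl_Aset.
by rewrite mulrCA mulfV ?mulr1 //; exact: mreal_Aset_neq0.
Qed.

Lemma condA_Acyl1 b v : v \in th b ->
  condA th nu (Acyl th [:: (b, v)]) = P b v * mreal mu (cyl [:: b]).
Proof.
by move=> hv; rewrite hMP // /mreal (hdes [:: b]) choices_seq1 big_map.
Qed.

Lemma mreal_cyl1_desub a : mreal nu (cyl [:: a]) =
  mreal nu (Aset th) * \sum_(b : Alph) MP th P a b * mreal mu (cyl [:: b]).
Proof.
rewrite (mreal_cyl1_tower rs rec hnu) big_enum mulr_sumr; apply: eq_bigr => b _.
rewrite /MP big_distrl mulr_sumr big_seq [RHS]big_seq; apply: eq_bigr => v hv.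
rewrite mreal_Acyl1_condA condA_Acyl1 //.
by rewrite -[RHS]/(_ * ((P b v * (count_mem a v)%:R) * mreal mu (cyl [:: b]))); ring.
Qed.

Lemma mreal_Aset_lamP : mreal nu (Aset th) * lamP th mu P = 1.
Proof.
rewrite -(sum_mreal_cyl1 nu); under [RHS]eq_bigr do rewrite mreal_cyl1_desub.
rewrite -mulr_sumr exchange_big /lamP; congr (_ * _); apply: eq_bigr => b _.
rewrite -big_distrl /= mulrC; congr (_ * _).
rewrite /MP exchange_big /=; apply: eq_bigr => v _.
by rewrite -mulr_sumr sumr_count_mem.
Qed.

Lemma Rvec_desub a :
  Rvec nu a = (lamP th mu P)^-1 * \sum_(b : Alph) MP th P a b * Rvec mu b.
Proof.
have hlam := mreal_Aset_lamP.
have hl0 : lamP th mu P != 0.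
  by apply: contra_eq_neq hlam => ->; rewrite mulr0 eq_sym oner_neq0.
rewrite /Rvec -/(mreal nu _) mreal_cyl1_desub; congr (_ * _).
by rewrite -[LHS]mulr1 -(mulfV hl0) mulrA hlam mul1r.
Qed.

End Desubstitution.

Section ProbabilityChoice.
Variables (Alph : finType) (a0 : Alph) (R : realType).
Variable th : Alph -> seq (seq Alph).
Hypothesis rs : is_rsubst th.
Local Notation T := (SS Alph a0).

Variable mu : probability T R.
Variable P : Alph -> seq Alph -> R.
Hypothesis hP : prob_choice th P.

Lemma lamP_ge1 : 1 <= lamP th mu P.
Proof.
rewrite -(sum_mreal_cyl1 mu) /lamP; apply: ler_sum => a _.
rewrite -{1}(mulr1 (mreal mu _)); apply: ler_wpM2l; first exact: mreal_ge0.
have [h0 hs] := hP a.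
apply: (le_trans (y := \sum_(v <- th a) P a v)); first by rewrite hs.
rewrite big_seq [X in _ <= X]big_seq; apply: ler_sum => v hv.
rewrite -{1}(mulr1 (P a v)); apply: ler_wpM2l; first exact: h0.
by rewrite ler1n; exact: (size_subst_gt0 rs hv).
Qed.

Lemma choices_mem u vs : vs \in choices th u ->
  size vs = size u /\ all (fun p => p.2 \in th p.1) (zip u vs).
Proof.
elim: u vs => [|a u IH] vs /=; first by rewrite inE => /eqP ->.
move=> /allpairsP [[v ws] /= [hv hws ->]] /=.
by have [-> ->] := IH _ hws; rewrite hv.
Qed.

Lemma sum_choices_prod u : \sum_(vs <- choices th u) \prod_(p <- zip u vs) P p.1 p.2 = 1.
Proof.
elim: u => [|a u IH]; first by rewrite /= big_seq1 big_nil.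
rewrite /= big_allpairs_dep /=.
rewrite -[RHS](proj2 (hP a)); apply: eq_bigr => v _.
rewrite (eq_bigr (fun vs => P a v * \prod_(p <- zip u vs) P p.1 p.2)); last by move=> vs _; rewrite big_cons.
by rewrite -mulr_sumr IH mulr1.
Qed.

End ProbabilityChoice.

Section Transfer.
Variables (Alph : finType) (a0 : Alph) (R : realType).
Variable th : Alph -> seq (seq Alph).
Hypothesis rs : is_rsubst th.
Hypothesis rec : recognisable th.
Local Notation T := (SS Alph a0).
Variable mu : probability T R.
Variable P : Alph -> seq Alph -> R.
Variable rho : probability T R.

Definition tower_slice b v i (B : set T) : set T :=
  Acyl th [:: (b, v)] `&` (iter i (@Defs.shift Alph) : T -> T) @^-1` B.

Definition tower_mass (B : set T) := \sum_(b <- enum Alph) \sum_(v <- th b)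
   \sum_(i <- iota 0 (size v)) mreal rho (tower_slice b v i B).

Definition tower_index : seq ((Alph * seq Alph) * nat) :=
  [seq (bv, i) | bv <- [seq (b, v) | b <- enum Alph, v <- th b], i <- iota 0 (size bv.2)].

Lemma measurable_tower_slice b v i B : measurable B -> measurable (tower_slice b v i B).
Proof. by move=> mB; apply: measurableI; [exact: measurable_Acyl|exact: measurable_iter_shift_preimage]. Qed.

Lemma indic_tower_slice_out b v i B y : ~ Acyl th [:: (b, v)] y ->
  \1_(tower_slice b v i B) y = 0 :> R.
Proof. by move=> h; rewrite indicE; case: (boolP (y \in _)) => // /set_mem []. Qed.

Lemma retA_indic_sum (B : set T) y : Aset th y ->
  \sum_(i < retA th y) \1_B (iter i (@Defs.shift Alph) y) =
  \sum_(t <- tower_index) \1_(tower_slice t.1.1 t.1.2 t.2 B) y :> R.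
Proof.
move=> hy; have [b0 [v0 h0]] := Aset_Acyl1 hy.
rewrite (retA_Acyl1 rs rec h0) big_allpairs_dep /= big_allpairs_dep /=.
rewrite (bigD1_seq b0) ?mem_enum ?enum_uniq //= [X in _ = _ + X]big1_seq; last first.
  move=> b /andP [hb _]; rewrite big1_seq // => v _; rewrite big1_seq // => i _.
  apply: indic_tower_slice_out => h; have [e _] := Acyl1_uniq rs rec h h0.
  by move: hb; rewrite e eqxx.
rewrite addr0 (bigD1_seq v0) ?(Acyl1_mem h0) //=; last by have [] := rs b0.
rewrite [X in _ = _ + X]big1_seq; last first.
  move=> v /andP [hv _]; rewrite big1_seq // => i _.
  apply: indic_tower_slice_out => h; have [_ e] := Acyl1_uniq rs rec h h0.
  by move: hv; rewrite e eqxx.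
rewrite addr0 (_ : iota 0 (size v0) = index_iota 0 (size v0)); last by rewrite /index_iota subn0.
rewrite big_mkord; apply: eq_bigr => i _.
rewrite !indicE; congr (_%:R); congr nat_of_bool; apply/idP/idP.
  by move=> /set_mem h; apply/mem_set.
by move=> /set_mem [_ h]; apply/mem_set.
Qed.

Lemma integral_retA_indic (B : set T) : measurable B ->
  (\int[rho]_(y in (Aset th : set T))
     (\sum_(i < retA th y) (\1_B (iter i (@Defs.shift Alph) y) : R))%:E = (tower_mass B)%:E)%E.
Proof.
move=> mB; have mE t := measurable_tower_slice t.1.1 t.1.2 t.2 mB.
rewrite (eq_integral (fun y => \sum_(t <- tower_index) (\1_(tower_slice t.1.1 t.1.2 t.2 B) y)%:E)); last first.
  by move=> y; rewrite in_setE => hy; rewrite retA_indic_sum // sumEFin.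
rewrite ge0_integral_sum; [ | exact: measurable_Aset | | ]; last first.
- by move=> t y _; rewrite lee_fin indicE ler0n.
- move=> t; apply/measurable_realfun.measurable_EFinP.
  exact: measurable_realfun.measurable_indic.
rewrite (eq_bigr (fun t => (mreal rho (tower_slice t.1.1 t.1.2 t.2 B))%:E)); last first.
  move=> t _; rewrite integral_indic; [|exact: measurable_Aset|exact: mE].
  rewrite setIidl; first exact: mrealE (mE t).
  by move=> y [h _]; exact: Acyl_Aset h.
by rewrite sumEFin /tower_mass big_allpairs_dep /= big_allpairs_dep.
Qed.

Variable nu : probability T R.
Hypothesis hnuB : forall B : set T, measurable B ->
      nu B = (((lamP th mu P)^-1)%:E *
        \int[rho]_(y in (Aset th : set T))
            (\sum_(i < retA th y) (\1_B (iter i (@Defs.shift Alph) y) : R))%:E)%E.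

Lemma transfer_tower_mass B : measurable B -> nu B = ((lamP th mu P)^-1 * tower_mass B)%:E.
Proof. by move=> mB; rewrite hnuB // integral_retA_indic. Qed.

Hypothesis hrho : is_varthetaP th mu P rho.
Hypothesis hP : prob_choice th P.

Lemma mreal_rho_Aset : mreal rho (Aset th) = 1.
Proof. by have [h _ _] := hrho; rewrite /mreal h. Qed.

Lemma mreal_rho_Acyl ws : all (fun p => p.2 \in th p.1) ws ->
  mreal rho (Acyl th ws) = mreal mu (cyl (unzip1 ws)) * \prod_(p <- ws) P p.1 p.2.
Proof. by have [_ _ h] := hrho; exact: h. Qed.

Lemma mreal_rho_Acyl1 b v : v \in th b ->
  mreal rho (Acyl th [:: (b, v)]) = mreal mu (cyl [:: b]) * P b v.
Proof. by move=> hv; rewrite mreal_rho_Acyl /= ?hv // big_seq1. Qed.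

Lemma lamP_neq0 : lamP th mu P != 0.
Proof. by have := lamP_ge1 rs mu hP; apply: contraTneq => ->; rewrite ler10. Qed.

Lemma tower_mass_sub_Aset (E : set T) : measurable E -> E `<=` Aset th ->
  tower_mass E = mreal rho E.
Proof.
move=> mE sE.
rewrite -[mreal rho E](_ : mreal rho (E `&` Aset th) = _); last by rewrite setIidl.
rewrite (mreal_Aset_pieces rs rec) //; apply: eq_bigr => b _.
rewrite big_seq [RHS]big_seq; apply: eq_bigr => v hv.
have hn := size_subst_gt0 rs hv.
rewrite (_ : iota 0 (size v) = 0%N :: iota 1 (size v).-1); last by case: (size v) hn.
rewrite big_cons big1_seq ?addr0; last first.
  move=> i /andP [_]; rewrite mem_iota => /andP [hi1 hi2].
  rewrite (_ : tower_slice b v i E = set0) ?/mreal ?measure0 //.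
  apply/seteqP; split => // y [h1 h2].
  apply: (Acyl1_iter_shift_notin_Aset rs rec h1 (i := i)); first by apply/andP; split; [|rewrite -(prednK hn)].
  exact: sE.
by rewrite /tower_slice /=.
Qed.

Lemma transfer_sub_Aset (E : set T) : measurable E -> E `<=` Aset th ->
  nu E = ((lamP th mu P)^-1 * mreal rho E)%:E.
Proof. by move=> mE sE; rewrite transfer_tower_mass // tower_mass_sub_Aset. Qed.

Lemma condA_transfer (E : set T) : measurable E -> E `<=` Aset th -> condA th nu E = mreal rho E.
Proof.
move=> mE sE; rewrite /condA setIidl // transfer_sub_Aset // transfer_sub_Aset //; last exact: measurable_Aset.
rewrite /= mreal_rho_Aset mulr1 mulrAC mulfV ?mul1r //.
by rewrite invr_eq0 lamP_neq0.
Qed.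

Lemma transfer_desub : desub_eq th nu mu.
Proof.
move=> u; rewrite -/(mreal mu _).
rewrite big_seq (eq_bigr (fun vs => mreal mu (cyl u) * \prod_(p <- zip u vs) P p.1 p.2)); last first.
  move=> vs hvs; have [hs ha] := choices_mem hvs.
  rewrite condA_transfer; last 2 first.
  - exact: measurable_Acyl.
  - by move=> y; exact: Acyl_Aset.
  by rewrite mreal_rho_Acyl // unzip1_zip // hs.
by rewrite -big_seq -mulr_sumr (sum_choices_prod hP) mulr1.
Qed.

Lemma transfer_inMP : inMP th P nu.
Proof.
have hc : forall a v, v \in th a -> condA th nu (Acyl th [:: (a, v)]) = mreal mu (cyl [:: a]) * P a v.
  move=> a v hv; rewrite condA_transfer ?mreal_rho_Acyl1 //; first exact: measurable_Acyl.
  by move=> y; exact: Acyl_Aset.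
move=> a v hv; rewrite hc // big_seq (eq_bigr (fun u => mreal mu (cyl [:: a]) * P a u)); last first.
  by move=> u hu; rewrite hc.
by rewrite -big_seq -mulr_sumr (proj2 (hP a)) mulr1 mulrC.
Qed.

Lemma transfer_subshift : nu (subshift th) = 1%E.
Proof.
rewrite transfer_tower_mass; last exact: measurable_subshift.
have -> : tower_mass (subshift th) = lamP th mu P.
  rewrite /tower_mass /lamP -big_enum; apply: eq_bigr => b _.
  rewrite mulr_sumr big_seq [RHS]big_seq; apply: eq_bigr => v hv.
  rewrite (eq_bigr (fun _ => mreal rho (Acyl th [:: (b, v)]))); last first.
    move=> i _; congr (mreal rho _); apply/seteqP; split => y; first by case.
    move=> h; split => //=; apply: subshift_iter; exact: Acyl_subshift h.
  by rewrite sumr_const_seq size_iota mreal_rho_Acyl1 // -/(mreal mu _); ring.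
by rewrite mulVf // lamP_neq0.
Qed.

Lemma telescope_iota (g : nat -> R) n :
  \sum_(i <- iota 0 n) g i.+1 + g 0%N = \sum_(i <- iota 0 n) g i + g n.
Proof.
elim: n => [|n IH]; first by rewrite !big_nil.
rewrite -addn1 iotaD !big_cat !big_seq1 /= add0n addn1.
by rewrite addrAC IH addrAC.
Qed.

Lemma SA_preimage (B : set T) : (SA th @^-1` B : set T) =
  (\big[setU/set0]_(b <- enum Alph) \big[setU/set0]_(v <- th b) tower_slice b v (size v) B)
  `|` (B `&` ~` Aset th).
Proof.
apply/seteqP; split => y.
  move=> hy; case: (pselect (Aset th y)) => hA.
    have [b [v h]] := Aset_Acyl1 hA; left.
    apply/bigsetU_seqP; exists b; split; first by rewrite mem_enum.
    apply/bigsetU_seqP; exists v; split; first exact: Acyl1_mem h.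
    by split => //; move: hy; rewrite /SA /= (retA_Acyl1 rs rec h).
  right; split => //; move: hy; rewrite /SA /= /retA xgetPN //.
  by move=> n [x [w [c [D _]]]]; apply: hA; exists x, w, c.
case => [/bigsetU_seqP [b [_ /bigsetU_seqP [v [_ [h hB]]]]]|[hB hA]].
  by rewrite /= /SA (retA_Acyl1 rs rec h).
rewrite /= /SA /retA xgetPN //.
by move=> n [x [w [c [D _]]]]; apply: hA; exists x, w, c.
Qed.

Lemma measurable_SA_preimage (B : set T) : measurable B -> measurable (SA th @^-1` B : set T).
Proof.
move=> mB; rewrite SA_preimage; apply: measurableU.
  apply: bigsetU_measurable => b _; apply: bigsetU_measurable => v _.
  exact: measurable_tower_slice.
by apply: measurableI => //; apply: measurableC; exact: measurable_Aset.
Qed.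

(* S_A-invariance of rho: the slices just above the top of the towers carry the
   same mass as the bases. *)
Lemma mreal_rho_tower_top (B : set T) : measurable B ->
  \sum_(b <- enum Alph) \sum_(v <- th b) mreal rho (tower_slice b v (size v) B) =
  \sum_(b <- enum Alph) \sum_(v <- th b) mreal rho (tower_slice b v 0 B).
Proof.
move=> mB; have mSA := measurable_SA_preimage mB.
have mA : measurable (Aset th : set T) by exact: measurable_Aset.
transitivity (mreal rho (SA th @^-1` B `&` Aset th)).
  rewrite (mreal_Aset_pieces rs rec) //; apply: eq_bigr => b _; apply: eq_bigr => v _.
  congr (mreal rho _); apply/seteqP; split => y [h hy]; split => //.
    by rewrite /= /SA (retA_Acyl1 rs rec h).
  by move: hy; rewrite /= /SA (retA_Acyl1 rs rec h).
rewrite -(mreal_setI_full mA mSA mreal_rho_Aset) /mreal.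
have [_ hSA _] := hrho; rewrite hSA //.
by rewrite -/(mreal rho B) (mreal_setI_full mA mB mreal_rho_Aset) mreal_Aset_pieces.
Qed.

Lemma transfer_shift_invariant (B : set T) : measurable B ->
  nu ((@Defs.shift Alph : T -> T) @^-1` B) = nu B.
Proof.
move=> mB.
have mB1 : measurable ((@Defs.shift Alph : T -> T) @^-1` B).
  exact: (measurable_translate_preimage (d := 1)).
rewrite !transfer_tower_mass //; congr (_ * _)%:E.
apply: (addIr (\sum_(b <- enum Alph) \sum_(v <- th b) mreal rho (tower_slice b v 0 B))).
rewrite -{2}(mreal_rho_tower_top mB) /tower_mass -!big_split /=; apply: eq_bigr => b _.
rewrite -!big_split /=; apply: eq_bigr => v _.
exact: telescope_iota.
Qed.

Lemma transfer_inM : inM th nu.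
Proof. by split; [exact: transfer_subshift|exact: transfer_shift_invariant]. Qed.

End Transfer.

Lemma transfer_fibre (Alph : finType) (a0 : Alph) (R : realType)
    (th : Alph -> seq (seq Alph)) (mu nu : probability (SS Alph a0) R)
    (P : Alph -> seq Alph -> R) :
  is_rsubst th -> recognisable th -> prob_choice th P -> is_transfer th mu P nu ->
  [/\ inM th nu, desub_eq th nu mu & inMP th P nu].
Proof.
move=> rs rec hP [rho [hrho hnuB]].
have h1 := transfer_inM rs rec hnuB hrho hP.
have h2 := transfer_desub rs rec hnuB hrho hP.
by have h3 := transfer_inMP rs rec hnuB hrho hP.
Qed.

Lemma lamP_Rvec (Alph : finType) (a0 : Alph) (R : realType)
    (th : Alph -> seq (seq Alph)) (mu mu' : probability (SS Alph a0) R)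
    (P : Alph -> seq Alph -> R) :
  (forall a, Rvec mu a = Rvec mu' a) -> lamP th mu P = lamP th mu' P.
Proof. by move=> hR; apply: eq_bigr => a _; have := hR a; rewrite /Rvec => ->. Qed.

Unset Implicit Arguments.
Set Strict Implicit.

Theorem mainTheorem8 (Alph : finType) (a0 : Alph) (R : realType)
    (th : Alph -> seq (seq Alph)) :
  is_rsubst th ->
  primitive_rs th ->
  geom_compatible R th ->
  recognisable th ->
  forall (mu : probability (SS Alph a0) R) (P : Alph -> seq Alph -> R),
  inM th mu ->
  prob_choice th P ->
  [/\ (forall nu : probability (SS Alph a0) R,
         inM th nu -> desub_eq th nu mu -> inMP th P nu ->
         forall a, Rvec nu a = (lamP th mu P)^-1 * \sum_(b : Alph) MP th P a b * Rvec mu b),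
      (forall nu : probability (SS Alph a0) R,
         is_transfer th mu P nu ->
         [/\ inM th nu, desub_eq th nu mu, inMP th P nu &
             forall a, Rvec nu a = (lamP th mu P)^-1 * \sum_(b : Alph) MP th P a b * Rvec mu b])
    & (forall mu' : probability (SS Alph a0) R, inM th mu' ->
         (forall a, Rvec mu a = Rvec mu' a) ->
         forall nu nu' : probability (SS Alph a0) R,
           is_transfer th mu P nu -> is_transfer th mu' P nu' ->
           forall a, Rvec nu a = Rvec nu' a)].
Proof.
move=> rs _ _ rec mu P _ hP.
split=> [nu hnu hd hM|nu ht|mu' _ hR nu nu' ht ht' a].
- exact: (Rvec_desub rs rec hnu hd hM).
- have [hnu hd hM] := transfer_fibre rs rec hP ht.
  by split=> //; exact: (Rvec_desub rs rec hnu hd hM).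
have [hnu hd hM] := transfer_fibre rs rec hP ht.
have [hnu' hd' hM'] := transfer_fibre rs rec hP ht'.
rewrite (Rvec_desub rs rec hnu hd hM) (Rvec_desub rs rec hnu' hd' hM') (lamP_Rvec th P hR).
by congr (_ * _); apply: eq_bigr => b _; rewrite hR.
Qed.
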